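(* Let $\beta>0$, $\rho>0$, let $f,c_i$ ($i\in\mathcal I=\{1,\dots,m\}$) be differentiable, let $(x_k,u_k)\in\mathbb{R}^n\times\mathbb{R}^m$, and let $H_k$ be a symmetric $n\times n$ matrix. Write $c_{ki}=c_i(x_k)$, $\nabla c_{ki}=\nabla c_i(x_k)$, $\nabla f_k=\nabla f(x_k)$, $y_{ki}=y_i(x_k,u_k;\beta,\rho)$, $\lambda_{ki}=\lambda_i(x_k,u_k;\beta,\rho)$, $\nu_{ki}=\lambda_{ki}/(y_{ki}+\lambda_{ki})$, $w_{ki}=\rho\beta/(y_{ki}+\lambda_{ki})^2$, and $B_k=H_k+\sum_{i}\nu_{ki}\nabla c_{ki}\nabla c_{ki}^T$. For $d=(d_x,d_u)\in\mathbb{R}^n\times\mathbb{R}^m$ consider the QP $$\min\ q_k(d)=\Big(\rho\nabla f_k+\sum_i\lambda_{ki}\nabla c_{ki}\Big)^Td_x+\tfrac12 d^TQ_kd\quad\text{s.t.}\quad \nu_{ki}\nabla c_{ki}^Td_x-\rho\frac{y_{ki}}{y_{ki}+\lambda_{ki}}d_{ui}=-(c_{ki}+y_{ki}),\ i\in\mathcal I,$$ where $Q_k=\begin{pmatrix}H_k+\sum_i w_{ki}\nabla c_{ki}\nabla c_{ki}^T & G_k\\ G_k^T & \mathrm{diag}(\rho^2w_{k1},\dots,\rho^2w_{km})\end{pmatrix}$ with $G_k$ the $n\times m$ matrix whose $i$th column is $\rho w_{ki}\nabla c_{ki}$. Then: (1) Any KKT point (in particular any solution) $d=(d_x,d_u)$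 of this QP satisfies the Newton system $$B_kd_x+\sum_i\rho\nu_{ki}d_{ui}\nabla c_{ki}=-\Big(\rho\nabla f_k+\sum_i\lambda_{ki}\nabla c_{ki}\Big),\qquad \rho\nu_{ki}\nabla c_{ki}^Td_x-\rho^2\frac{y_{ki}}{y_{ki}+\lambda_{ki}}d_{ui}=-\rho(c_{ki}+y_{ki}),\ i\in\mathcal I.$$ (2) If $d_x^TH_kd_x+\sum_i\nu_{ki}(\nabla c_{ki}^Td_x)^2>0$ for all nonzero $d_x\in\mathbb{R}^n$, then the QP has a unique solution, and hence the Newton system in (1) is consistent.
   Context: For $\beta,\rho>0$: $y_i(x,u;\beta,\rho)=\tfrac12[\sqrt{(c_i(x)+\rho u_i)^2+4\rho\beta}-(c_i(x)+\rho u_i)]$, $\lambda_i(x,u;\beta,\rho)=\tfrac12[\sqrt{(c_i(x)+\rho u_i)^2+4\rho\beta}+(c_i(x)+\rho u_i)]$; both are positive and $\lambda_iy_i=\rho\beta$. *)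

From HB Require Import structures.
From mathcomp Require Import all_boot all_order all_algebra.
Set Implicit Arguments. Unset Strict Implicit. Unset Printing Implicit Defensive.
Import Order.TTheory GRing.Theory Num.Theory.
Local Open Scope ring_scope.

(* y_i(x,u;beta,rho) and lambda_i(x,u;beta,rho), as functions of the
   values c_i(x) and u_i. *)
Definition yfun (R : rcfType) (beta rho ci ui : R) : R :=
  (Num.sqrt ((ci + rho * ui) ^+ 2 + 4 * rho * beta) - (ci + rho * ui)) / 2.
Definition lamfun (R : rcfType) (beta rho ci ui : R) : R :=
  (Num.sqrt ((ci + rho * ui) ^+ 2 + 4 * rho * beta) + (ci + rho * ui)) / 2.

Section QP.
Variables (R : rcfType) (n m : nat) (beta rho : R).
(* data at the iterate (x_k,u_k):
   c  = (c_{k1},...,c_{km}),  u = u_k,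
   gc i = grad c_i(x_k),  gf = grad f(x_k),  H = H_k *)
Variables (c u : 'cV[R]_m) (gc : 'I_m -> 'cV[R]_n) (gf : 'cV[R]_n) (H : 'M[R]_n).

Definition yk (i : 'I_m) : R := yfun beta rho (c i 0) (u i 0).
Definition lamk (i : 'I_m) : R := lamfun beta rho (c i 0) (u i 0).
Definition nuk (i : 'I_m) : R := lamk i / (yk i + lamk i).
Definition wk (i : 'I_m) : R := rho * beta / (yk i + lamk i) ^+ 2.

Definition gk : 'cV[R]_n := rho *: gf + \sum_(i < m) lamk i *: gc i.

Definition Bk : 'M[R]_n := H + \sum_(i < m) nuk i *: (gc i *m (gc i)^T).

Definition Gk : 'M[R]_(n, m) := \matrix_(j < n, i < m) (rho * wk i * gc i j 0).

Definition Qk : 'M[R]_(n + m) :=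
  block_mx (H + \sum_(i < m) wk i *: (gc i *m (gc i)^T)) Gk
           Gk^T (diag_mx (\row_(i < m) (rho ^+ 2 * wk i))).

Definition qk (dx : 'cV[R]_n) (du : 'cV[R]_m) : R :=
  (gk^T *m dx) 0 0 + 2^-1 * ((col_mx dx du)^T *m Qk *m col_mx dx du) 0 0.

Definition Ak : 'M[R]_(m, n + m) :=
  row_mx (\matrix_(i < m, j < n) (nuk i * gc i j 0))
         (diag_mx (\row_(i < m) (- (rho * (yk i / (yk i + lamk i)))))).

Definition qp_feasible (dx : 'cV[R]_n) (du : 'cV[R]_m) : Prop :=
  forall i : 'I_m,
    nuk i * ((gc i)^T *m dx) 0 0 - rho * (yk i / (yk i + lamk i)) * du i 0
    = - (c i 0 + yk i).

Definition qp_kkt (dx : 'cV[R]_n) (du : 'cV[R]_m) : Prop :=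
  qp_feasible dx du /\
  exists pi : 'cV[R]_m, col_mx gk 0 + Qk *m col_mx dx du = Ak^T *m pi.

Definition qp_solution (dx : 'cV[R]_n) (du : 'cV[R]_m) : Prop :=
  qp_feasible dx du /\
  forall (dx' : 'cV[R]_n) (du' : 'cV[R]_m), qp_feasible dx' du' -> qk dx du <= qk dx' du'.

Definition newton_system (dx : 'cV[R]_n) (du : 'cV[R]_m) : Prop :=
  Bk *m dx + \sum_(i < m) (rho * nuk i * du i 0) *: gc i = - gk /\
  forall i : 'I_m,
    rho * nuk i * ((gc i)^T *m dx) 0 0 - rho ^+ 2 * (yk i / (yk i + lamk i)) * du i 0
    = - (rho * (c i 0 + yk i)).

Definition pd_condition : Prop :=
  forall dx : 'cV[R]_n, dx != 0 ->
    0 < (dx^T *m H *m dx) 0 0 + \sum_(i < m) nuk i * ((gc i)^T *m dx) 0 0 ^+ 2.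

End QP.

(* The constraints are solved by d_u = du_of d_x.  With theta_i = y_i/(y_i+lambda_i) one
   has nu_i + theta_i = 1, w_i = nu_i theta_i and lambda_i/y_i = nu_i/theta_i (because
   lambda_i y_i = rho beta), so on the feasible set q_k is, up to a constant, the quadratic
   1/2 d_x^T M d_x + b^T d_x with M = H_k + sum_i (lambda_i/y_i) grad c_i grad c_i^T.
   A solution of the QP minimizes this quadratic; at a KKT point, testing the KKT equation
   against the feasible direction given by the reduced gradient (it lies in the kernel of
   the constraints) shows that this gradient is orthogonal to itself.  Either way
   M d_x + b = 0, which together with feasibility is the Newton system.  Since
   lambda_i/y_i >= nu_i, the positivity hypothesis makes M positive definite, so
   M d_x + b = 0 has exactly one solution, the unique minimizer. *)

From HB Require Import structures.
From mathcomp Require Import all_boot all_order all_algebra.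
From mathcomp Require Import ring lra.
Import Order.TTheory GRing.Theory Num.Theory.
Local Open Scope ring_scope.
Set Implicit Arguments. Unset Strict Implicit.

Lemma entryD (R : nmodType) k l (A B : 'M[R]_(k, l)) i j : (A + B) i j = A i j + B i j.
Proof. by rewrite mxE. Qed.

Lemma entryB (R : zmodType) k l (A B : 'M[R]_(k, l)) i j : (A - B) i j = A i j - B i j.
Proof. by rewrite !mxE. Qed.

Lemma entryZ (R : pzRingType) k l (a : R) (A : 'M[R]_(k, l)) i j :
  (a *: A) i j = a * A i j.
Proof. by rewrite mxE. Qed.

Lemma mx11_mulE (R : pzSemiRingType) (A B : 'M[R]_1) : (A *m B) 0 0 = A 0 0 * B 0 0.
Proof. by rewrite mxE big_ord1. Qed.

Lemma dotmxC (R : comPzRingType) k (x z : 'cV[R]_k) : (x^T *m z) 0 0 = (z^T *m x) 0 0.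
Proof. by rewrite -[x^T *m z]trmxK trmx_mul trmxK mxE. Qed.

Lemma formmxC (R : comPzRingType) k l (p : 'cV[R]_k) (A : 'M[R]_(k, l)) (q : 'cV[R]_l) :
  (p^T *m A *m q) 0 0 = (q^T *m A^T *m p) 0 0.
Proof. by rewrite -mulmxA dotmxC trmx_mul. Qed.

Lemma dotmx_self_eq0 (R : realDomainType) k (z : 'cV[R]_k) :
  (z^T *m z) 0 0 = 0 -> z = 0.
Proof.
rewrite mxE => /eqP; rewrite psumr_eq0 => [/allP z0|j _]; last first.
  by rewrite mxE -expr2 sqr_ge0.
apply/matrixP => j i; rewrite ord1 !mxE.
by have /implyP/(_ isT) := z0 j (mem_index_enum j); rewrite mxE mulf_eq0 orbb => /eqP.
Qed.

Lemma quad_ge0_lin_eq0 (R : realFieldType) (S P : R) :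
  (forall t, 0 <= t * S + t ^+ 2 * P) -> S = 0.
Proof.
move=> ge0; set A := `|P| + 1.
have A_gt0 : 0 < A by rewrite ltr_pwDr.
have PltA : P < A by have := ler_norm P; rewrite /A; lra.
have := ge0 (- S / A).
have -> : - S / A * S + (- S / A) ^+ 2 * P = S ^+ 2 * (P - A) / A ^+ 2.
  by field; rewrite gt_eqF.
rewrite pmulr_lge0 ?invr_gt0 ?exprn_gt0 // => S2le0.
apply/eqP; rewrite -sqrf_eq0 eq_le sqr_ge0 andbT; nra.
Qed.

Section QuadraticFunction.
Variables (R : realFieldType) (k : nat) (M : 'M[R]_k) (b : 'cV[R]_k).
Hypothesis M_sym : M^T = M.

Definition quadf (x : 'cV[R]_k) : R := 2^-1 * (x^T *m M *m x) 0 0 + (b^T *m x) 0 0.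

Definition posdefmx := forall v : 'cV[R]_k, v != 0 -> 0 < (v^T *m M *m v) 0 0.

Lemma quadfD x v :
  quadf (x + v) = quadf x + ((M *m x + b)^T *m v) 0 0 + 2^-1 * (v^T *m M *m v) 0 0.
Proof.
have vMx : (v^T *m M *m x) 0 0 = (x^T *m M *m v) 0 0 by rewrite formmxC M_sym.
rewrite /quadf !linearD /= !(mulmxDl, mulmxDr) !entryD vMx trmx_mul M_sym.
by field.
Qed.

Lemma quadf_min_stationary x : (forall y, quadf x <= quadf y) -> M *m x + b = 0.
Proof.
move=> xmin; set z := M *m x + b; apply: dotmx_self_eq0.
apply: (@quad_ge0_lin_eq0 _ _ (2^-1 * (z^T *m M *m z) 0 0)) => t.
have := xmin (x + t *: z); rewrite quadfD -/z !linearZ /= -!(scalemxAl, scalemxAr).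
rewrite !entryZ -addrA lerDl.
set s := (_ *m M *m z) 0 0.
by have -> : 2^-1 * (t * (t * s)) = t ^+ 2 * (2^-1 * s) by ring.
Qed.

Lemma stationary_quadf_min x : posdefmx -> M *m x + b = 0 ->
  forall y, quadf x <= quadf y /\ (quadf y <= quadf x -> y = x).
Proof.
move=> Mpd x_st y; rewrite -[y](subrKC x) quadfD x_st trmx0 mul0mx mxE addr0.
have [->|yx] := eqVneq (y - x) 0; first by rewrite mulmx0 mxE mulr0 !addr0.
have := Mpd _ yx; set s := (_ 0 0) => s_gt0.
split=> [|s_le0]; first lra.
have : s <= 0 by lra.
by rewrite leNgt s_gt0.
Qed.

Lemma posdefmx_unit : posdefmx -> M \in unitmx.
Proof.
move=> Mpd; rewrite unitmxE unitfE; apply/det0P => -[v v0 vM0].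
by have := Mpd v^T; rewrite trmx_eq0 trmxK vM0 mul0mx mxE ltxx => /(_ v0).
Qed.

Lemma posdefmx_stationary : posdefmx ->
  exists x, forall y, M *m y + b = 0 <-> y = x.
Proof.
move=> /posdefmx_unit Mu; exists (- (invmx M *m b)) => y.
split=> [/eqP | ->]; last by rewrite mulmxN mulmxA mulmxV // mul1mx addNr.
by rewrite addr_eq0 => /eqP My; rewrite -(mulKmx Mu y) My mulmxN.
Qed.
End QuadraticFunction.

Lemma normr_lt_sqrtD (R : rcfType) (s a : R) : 0 < a -> `|s| < Num.sqrt (s ^+ 2 + a).
Proof. by move=> a_gt0; rewrite -sqrtr_sqr ltr_sqrt ?ltrDl // ltr_wpDl ?sqr_ge0. Qed.

Section Complementarity.
Variables (R : rcfType) (beta rho : R).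
Hypotheses (beta_gt0 : 0 < beta) (rho_gt0 : 0 < rho).

Let norm_lt_sqrt s : `|s| < Num.sqrt (s ^+ 2 + 4 * rho * beta).
Proof. by rewrite normr_lt_sqrtD // !mulr_gt0. Qed.

Lemma yfun_gt0 ci ui : 0 < yfun beta rho ci ui.
Proof.
rewrite divr_gt0 //; have /[!ltr_norml] /andP[] := norm_lt_sqrt (ci + rho * ui).
lra.
Qed.

Lemma lamfun_gt0 ci ui : 0 < lamfun beta rho ci ui.
Proof.
rewrite divr_gt0 //; have /[!ltr_norml] /andP[] := norm_lt_sqrt (ci + rho * ui).
lra.
Qed.

Lemma mul_lamfun_yfun ci ui : lamfun beta rho ci ui * yfun beta rho ci ui = rho * beta.
Proof.
rewrite /lamfun /yfun; set s := ci + rho * ui.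
have disc_ge0 : 0 <= s ^+ 2 + 4 * rho * beta.
  by rewrite addr_ge0 ?sqr_ge0 // ltW // !mulr_gt0.
have := sqr_sqrtr disc_ge0; set q := Num.sqrt _ => q2.
have -> : (q + s) / 2 * ((q - s) / 2) = (q ^+ 2 - s ^+ 2) / 4 by field.
by rewrite q2; field.
Qed.
End Complementarity.

Section ReducedQP.
Variables (R : rcfType) (n m : nat) (beta rho : R) (c u : 'cV[R]_m)
  (gc : 'I_m -> 'cV[R]_n) (gf : 'cV[R]_n) (H : 'M[R]_n).
Hypotheses (beta_gt0 : 0 < beta) (rho_gt0 : 0 < rho) (H_sym : H^T = H).

Local Notation y := (yk beta rho c u).
Local Notation lam := (lamk beta rho c u).
Local Notation nu := (nuk beta rho c u).
Local Notation w := (wk beta rho c u).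
Local Notation g := (gk beta rho c u gc gf).
Local Notation feasible := (qp_feasible beta rho c u gc).

Definition theta i := y i / (y i + lam i).
Definition kap i := lam i / y i.
Definition cyk i := c i 0 + y i.
Definition dc i (x : 'cV[R]_n) := ((gc i)^T *m x) 0 0.

Lemma nu_theta_spec i :
  [/\ 0 < nu i, 0 < theta i, nu i + theta i = 1, w i = nu i * theta i
    & kap i = nu i / theta i].
Proof.
have y_gt0 : 0 < y i by exact: yfun_gt0.
have lam_gt0 : 0 < lam i by exact: lamfun_gt0.
have lamy : lam i * y i = rho * beta by exact: mul_lamfun_yfun.
have s_gt0 : 0 < y i + lam i by rewrite addr_gt0.
rewrite /nuk /theta /kap /wk -lamy.
by split; try exact: divr_gt0; field; rewrite ?gt_eqF.
Qed.

Lemma dcB i x z : dc i (x - z) = dc i x - dc i z.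
Proof. by rewrite /dc mulmxBr entryB. Qed.

Definition du_of (x : 'cV[R]_n) : 'cV[R]_m :=
  \col_i ((nu i * dc i x + cyk i) / (rho * theta i)).

Lemma qp_feasibleP x v : feasible x v <-> v = du_of x.
Proof.
split=> [feas | ->]; last first.
  move=> i; have [_ theta_gt0 _ _ _] := nu_theta_spec i.
  by rewrite -/(dc i x) mxE -/(theta i) -/(cyk i); field; rewrite !gt_eqF.
apply/matrixP => i j; rewrite ord1 mxE; have [_ theta_gt0 _ _ _] := nu_theta_spec i.
have := feas i; rewrite -/(theta i) -/(dc i x) -/(cyk i) => feas_i.
have -> : nu i * dc i x + cyk i = rho * theta i * v i 0 by lra.
by field; rewrite !gt_eqF.
Qed.

Lemma feasible_shift x v i : feasible x v ->
  dc i x + rho * v i 0 = (dc i x + cyk i) / theta i.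
Proof.
move=> /qp_feasibleP ->; have [_ theta_gt0 nu_theta _ _] := nu_theta_spec i.
rewrite mxE (_ : nu i = 1 - theta i); last by lra.
by field; rewrite !gt_eqF.
Qed.

Lemma form_rank1_update (a : 'I_m -> R) x z :
  (x^T *m (H + \sum_i a i *: (gc i *m (gc i)^T)) *m z) 0 0
  = (x^T *m H *m z) 0 0 + \sum_i a i * dc i x * dc i z.
Proof.
rewrite mulmxDr mulmxDl entryD mulmx_sumr mulmx_suml summxE; congr (_ + _).
apply: eq_bigr => i _; rewrite -scalemxAr -scalemxAl entryZ !mulmxA.
by rewrite -(mulmxA (x^T *m gc i)) mx11_mulE dotmxC mulrA.
Qed.

Lemma Gk_mul v : Gk beta rho c u gc *m v = \sum_i (rho * w i * v i 0) *: gc i.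
Proof.
apply/matrixP => j k; rewrite ord1 !mxE summxE; apply: eq_bigr => i _.
by rewrite !mxE mulrAC.
Qed.

Lemma Qk_form x1 u1 x2 u2 :
  ((col_mx x1 u1)^T *m Qk beta rho c u gc H *m col_mx x2 u2) 0 0 =
  (x1^T *m H *m x2) 0 0
  + \sum_i w i * (dc i x1 + rho * u1 i 0) * (dc i x2 + rho * u2 i 0).
Proof.
have G_form (x : 'cV_n) (v : 'cV_m) :
    (x^T *m Gk beta rho c u gc *m v) 0 0 = \sum_i rho * w i * v i 0 * dc i x.
  rewrite -mulmxA Gk_mul mulmx_sumr summxE; apply: eq_bigr => i _.
  by rewrite -scalemxAr entryZ dotmxC.
have D_form : (u1^T *m diag_mx (\row_i (rho ^+ 2 * w i)) *m u2) 0 0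
    = \sum_i rho ^+ 2 * w i * u1 i 0 * u2 i 0.
  by rewrite mul_mx_diag mxE; apply: eq_bigr => i _; rewrite !mxE [_ * (_ * _)]mulrC.
rewrite /Qk tr_col_mx mul_row_block mul_row_col !mulmxDl !entryD form_rank1_update.
rewrite [(u1^T *m _ *m x2) 0 0]formmxC trmxK !G_form D_form -!addrA; congr (_ + _).
by rewrite !addrA -!big_split; apply: eq_bigr => i _ /=; ring.
Qed.

Definition Mred : 'M[R]_n := H + \sum_i kap i *: (gc i *m (gc i)^T).
Definition bred : 'cV[R]_n := g + \sum_i (kap i * cyk i) *: gc i.

Lemma Mred_sym : Mred^T = Mred.
Proof.
rewrite /Mred linearD linear_sum /= H_sym; congr (_ + _); apply: eq_bigr => i _.
by rewrite linearZ /= trmx_mul trmxK; reflexivity.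
Qed.

Lemma bred_dot z : (bred^T *m z) 0 0 = (g^T *m z) 0 0 + \sum_i kap i * cyk i * dc i z.
Proof.
rewrite /bred linearD linear_sum /= mulmxDl mulmx_suml entryD summxE; congr (_ + _).
by apply: eq_bigr => i _; rewrite linearZ /= -scalemxAl entryZ.
Qed.

Lemma qk_du_of x :
  qk beta rho c u gc gf H x (du_of x)
  = quadf Mred bred x + 2^-1 * \sum_i kap i * cyk i ^+ 2.
Proof.
have feas := (qp_feasibleP x (du_of x)).2 erefl.
rewrite /qk /quadf Qk_form form_rank1_update bred_dot.
have -> : \sum_i w i * (dc i x + rho * du_of x i 0) * (dc i x + rho * du_of x i 0)
    = \sum_i kap i * dc i x * dc i x + 2 * \sum_i kap i * cyk i * dc i x
      + \sum_i kap i * cyk i ^+ 2.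
  rewrite mulr_sumr -!big_split; apply: eq_bigr => i _ /=.
  rewrite (feasible_shift i feas); have [_ theta_gt0 _ -> ->] := nu_theta_spec i.
  by field; rewrite gt_eqF.
by field.
Qed.

Lemma qk_grad_feasible_dir x v x' v' : feasible x v -> feasible x' v' ->
  ((col_mx g 0 + Qk beta rho c u gc H *m col_mx x v)^T *m (col_mx x' v' - col_mx x v)) 0 0
  = ((Mred *m x + bred)^T *m (x' - x)) 0 0.
Proof.
move=> feas feas'; rewrite opp_col_mx add_col_mx.
rewrite linearD /= mulmxDl entryD tr_col_mx mul_row_col trmx0 mul0mx addr0.
rewrite [X in _ + X]dotmxC mulmxA Qk_form [(Mred *m x + bred)^T]linearD /= mulmxDl.
rewrite entryD trmx_mul Mred_sym form_rank1_update bred_dot [(_ *m H *m x) 0 0]formmxC H_sym.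
suff -> : \sum_i w i * (dc i (x' - x) + rho * (v' - v) i 0) * (dc i x + rho * v i 0)
    = \sum_i kap i * dc i x * dc i (x' - x) + \sum_i kap i * cyk i * dc i (x' - x).
  by ring.
rewrite -big_split; apply: eq_bigr => i _ /=; rewrite dcB entryB.
(* the term of constraint i only sees dc i (x' - x) / theta i *)
rewrite (_ : _ + rho * _ = dc i x' + rho * v' i 0 - (dc i x + rho * v i 0)); last by ring.
rewrite !feasible_shift //; have [_ theta_gt0 _ -> ->] := nu_theta_spec i.
by field; rewrite gt_eqF.
Qed.

Lemma Ak_feasible x v : feasible x v ->
  Ak beta rho c u gc *m col_mx x v = - \col_i cyk i.
Proof.
move=> feas; apply/matrixP => i k; rewrite ord1 /Ak mul_row_col mul_diag_mx entryD.
rewrite !mxE -(feas i) mulNr mxE mulr_sumr; congr (_ - _).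
by apply: eq_bigr => j _; rewrite !mxE mulrA.
Qed.

Lemma kkt_stationary x v : qp_kkt beta rho c u gc gf H x v -> Mred *m x + bred = 0.
Proof.
move=> [feas [pi kkt]]; set z := Mred *m x + bred; apply: dotmx_self_eq0.
have feas' := (qp_feasibleP (z + x) (du_of (z + x))).2 erefl.
rewrite -[z in (_ *m z) 0 0](addrK x) -(qk_grad_feasible_dir feas feas') kkt.
by rewrite trmx_mul trmxK -mulmxA mulmxBr !Ak_feasible // subrr mulmx0 mxE.
Qed.

Lemma solution_stationary x v :
  qp_solution beta rho c u gc gf H x v -> Mred *m x + bred = 0.
Proof.
move=> [/qp_feasibleP -> xmin]; apply: (quadf_min_stationary Mred_sym) => x'.
by have := xmin x' _ ((qp_feasibleP _ _).2 erefl); rewrite !qk_du_of lerD2r.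
Qed.

Lemma solution_of_stationary x : posdefmx Mred -> Mred *m x + bred = 0 ->
  qp_solution beta rho c u gc gf H x (du_of x).
Proof.
move=> pd st; split=> [|x' v' /qp_feasibleP ->]; first exact/qp_feasibleP.
by rewrite !qk_du_of lerD2r; case: (stationary_quadf_min Mred_sym pd st x').
Qed.

Lemma newton_of_stationary x v : feasible x v -> Mred *m x + bred = 0 ->
  newton_system beta rho c u gc gf H x v.
Proof.
move=> feas st; split=> [|i]; last by rewrite -[RHS]mulrN -(feas i); ring.
have gc_mul i : gc i *m ((gc i)^T *m x) = dc i x *: gc i.
  by rewrite [(gc i)^T *m x]mx11_scalar mul_mx_scalar.
have -> : Bk beta rho c u gc H *m x + \sum_i (rho * nu i * v i 0) *: gc i
    = Mred *m x + \sum_i (kap i * cyk i) *: gc i.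
  rewrite !mulmxDl !mulmx_suml -!addrA; congr (_ + _); rewrite -!big_split.
  apply: eq_bigr => i _ /=; rewrite -!scalemxAl -!mulmxA gc_mul !scalerA -!scalerDl.
  have [_ theta_gt0 _ _ ->] := nu_theta_spec i; congr (_ *: _).
  transitivity (nu i * (dc i x + rho * v i 0)); first by ring.
  by rewrite (feasible_shift i feas); field; rewrite gt_eqF.
by move/eqP: st; rewrite /bred addrCA addr_eq0 => /eqP ->; rewrite opprK.
Qed.

Lemma Mred_posdef : pd_condition beta rho c u gc H -> posdefmx Mred.
Proof.
move=> pd x x_neq0; apply: (lt_le_trans (pd x x_neq0)).
rewrite form_rank1_update lerD2l; apply: ler_sum => i _.
rewrite -mulrA -expr2 ler_wpM2r ?sqr_ge0 //.
have [nu_gt0 theta_gt0 nu_theta _ ->] := nu_theta_spec i.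
by rewrite ler_pdivlMr //; nra.
Qed.

End ReducedQP.

Theorem lemma3p1 (R : rcfType) (n m : nat) (beta rho : R)
  (c u : 'cV[R]_m) (gc : 'I_m -> 'cV[R]_n) (gf : 'cV[R]_n) (H : 'M[R]_n) :
  0 < beta -> 0 < rho -> H^T = H ->
  ((forall (dx : 'cV[R]_n) (du : 'cV[R]_m),
      qp_kkt beta rho c u gc gf H dx du -> newton_system beta rho c u gc gf H dx du) /\
   (forall (dx : 'cV[R]_n) (du : 'cV[R]_m),
      qp_solution beta rho c u gc gf H dx du -> newton_system beta rho c u gc gf H dx du)) /\
  (pd_condition beta rho c u gc H ->
     (exists (dx : 'cV[R]_n) (du : 'cV[R]_m),
        qp_solution beta rho c u gc gf H dx du /\
        forall (dx' : 'cV[R]_n) (du' : 'cV[R]_m),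
          qp_solution beta rho c u gc gf H dx' du' -> dx' = dx /\ du' = du) /\
     (exists (dx : 'cV[R]_n) (du : 'cV[R]_m), newton_system beta rho c u gc gf H dx du)).
Proof.
move=> beta_gt0 rho_gt0 H_sym; split; first split=> dx du.
- move=> kkt; apply: (newton_of_stationary beta_gt0 rho_gt0 kkt.1).
  exact: kkt_stationary kkt.
- move=> sol; apply: (newton_of_stationary beta_gt0 rho_gt0 sol.1).
  exact: solution_stationary sol.
move=> /(Mred_posdef beta_gt0 rho_gt0) pd.
have [x0 stationaryE] := posdefmx_stationary (bred beta rho c u gc gf) pd.
have x0_st := (stationaryE x0).2 erefl.
set du0 := du_of beta rho c u gc x0.
have feas0 := (qp_feasibleP c u gc beta_gt0 rho_gt0 x0 du0).2 erefl.
split; exists x0, du0; last exact: newton_of_stationary feas0 x0_st.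
split=> [|dx du sol]; first exact: solution_of_stationary.
have dx_x0 := (stationaryE dx).1 (solution_stationary beta_gt0 rho_gt0 H_sym sol).
by split=> //; rewrite ((qp_feasibleP c u gc beta_gt0 rho_gt0 _ _).1 sol.1) dx_x0.
Qed.
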